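(* Let $G$ be a group generated by $x_1,\dots,x_n$, with finite commutator subgroup $C=[G,G]$, such that $G/C$ is free abelian of rank $n$ with basis the images of $x_1,\dots,x_n$. Let $P=X\cap\mathcal C_G(C)$ with $X=\{g_{\mathbf m}\in T: c_{\,x_1^{m_1}\cdots x_{k-1}^{m_{k-1}},\,x_k}=e \text{ for all } k\}$, and $Q=P\cap Z$ with $Z$ the center of $G$. Then $l_{\mathbf r,q}=e$ for every $\mathbf r\in\mathbb Z^n$ and every $q\in Q$.
   Context: Notation: $\bar g=g^{-1}$, $c_{gh}=\bar g\,\bar h\,g\,h$; $\mathcal C_G(C)$ is the centralizer of $C$ in $G$. For $\mathbf r\in\mathbb Z^n$, $g_{\mathbf r}=x_1^{r_1}\cdots x_n^{r_n}$, $T=\{g_{\mathbf r}\}$. Every $g\in G$ decomposes uniquely as $g=g_{\mathbf r}c$ with $c\in C$; write $\mathbf r_g=\mathbf r$. The link is $l_{\mathbf r,\lambda}=\overline{g_{\mathbf r+\mathbf r_\lambda}}\,\lambda\,g_{\mathbf r}\in C$. *)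

From mathcomp Require Import all_boot all_algebra.
From Stdlib Require Lists.List.
Set Implicit Arguments. Unset Strict Implicit. Unset Printing Implicit Defensive.
Import GRing.Theory.
Local Open Scope ring_scope.

Section GroupDefs.
Variables (G : Type) (mul : G -> G -> G) (inv : G -> G) (e : G).

Definition is_group : Prop :=
  [/\ forall a b c, mul a (mul b c) = mul (mul a b) c,
      forall a, mul e a = a,
      forall a, mul a e = a,
      forall a, mul (inv a) a = e
    & forall a, mul a (inv a) = e].

Definition zpow (g : G) (z : int) : G :=
  match z with
  | Posz k => iter k (mul g) e
  | Negz k => iter k.+1 (mul (inv g)) e
  end.

Definition gprod (s : seq G) : G := foldr mul e s.

Definition comm (g h : G) : G := mul (inv g) (mul (inv h) (mul g h)).

Inductive gen_by (S : G -> Prop) : G -> Prop :=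
  | gen_e : gen_by S e
  | gen_in g : S g -> gen_by S g
  | gen_mul g h : gen_by S g -> gen_by S h -> gen_by S (mul g h)
  | gen_inv g : gen_by S g -> gen_by S (inv g).

Definition in_comm_subgroup (g : G) : Prop :=
  gen_by (fun c => exists a b, c = comm a b) g.

Definition finite_pred (S : G -> Prop) : Prop :=
  exists s : seq G, forall g, S g -> Stdlib.Lists.List.In g s.

Definition in_centralizer (S : G -> Prop) (g : G) : Prop :=
  forall c, S c -> mul g c = mul c g.

Definition in_center (g : G) : Prop := forall h, mul g h = mul h g.

Variables (n : nat) (x : 'I_n -> G).

Definition g_vec (r : 'I_n -> int) : G :=
  gprod [seq zpow (x i) (r i) | i <- enum 'I_n].

(* x_1^{m_1} ... x_{k-1}^{m_{k-1}} (indices < k, 0-based) *)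
Definition g_prefix (m : 'I_n -> int) (k : 'I_n) : G :=
  gprod [seq zpow (x i) (m i) | i <- enum 'I_n & (nat_of_ord i < nat_of_ord k)%N].

Definition decomp (g : G) (r : 'I_n -> int) : Prop :=
  exists c, in_comm_subgroup c /\ g = mul (g_vec r) c.

Definition in_X (g : G) : Prop :=
  exists m : 'I_n -> int, g = g_vec m /\
    forall k : 'I_n, comm (g_prefix m k) (x k) = e.

Definition in_P (g : G) : Prop := in_X g /\ in_centralizer in_comm_subgroup g.

Definition in_Q (g : G) : Prop := in_P g /\ in_center g.

Definition link (r rl : 'I_n -> int) (lam : G) : G :=
  mul (inv (g_vec (fun i => r i + rl i))) (mul lam (g_vec r)).

End GroupDefs.

From Pilot Require Import Defs.
From mathcomp Require Import all_boot all_algebra.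
Set Implicit Arguments.
Unset Strict Implicit.
Unset Printing Implicit Defensive.
Import GRing.Theory.
Local Open Scope ring_scope.

(* Write q = g_m with m as in the definition of X.  The X-condition says that
   x_k commutes with x_1^{m_1} ... x_{k-1}^{m_{k-1}}, so x_k^{r_k} can be moved
   past that prefix for every k, and g_{r+m} = g_r g_m.  Modulo C the map
   r |-> g_r is a homomorphism, so the independence of the images of the x_i
   in G/C forces the exponent vector r_q to be m.  Hence
   l_{r,q} = (g_r g_m)^-1 g_m g_r = e because q is central. *)

Lemma enum_ord_prefix n (s1 s2 : seq 'I_n) (k : 'I_n) :
  enum 'I_n = s1 ++ k :: s2 ->
  s1 = [seq i <- enum 'I_n | (nat_of_ord i < nat_of_ord k)%N].
Proof.
move=> hs; have hval := val_enum_ord n; rewrite hs map_cat /= in hval.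
have hs1n : (size s1 < n)%N.
  have hsize := congr1 size hval; rewrite size_cat size_map size_iota /= in hsize.
  by rewrite -[X in (_ < X)%N]hsize addnS ltnS leq_addr.
have hk : val k = size s1.
  have := congr1 (nth 0%N ^~ (size s1)) hval.
  by rewrite nth_cat size_map ltnn subnn nth_iota.
apply: (inj_map val_inj).
have -> : map val [seq i <- enum 'I_n | (nat_of_ord i < nat_of_ord k)%N] =
          [seq v <- iota 0 n | (v < size s1)%N] by rewrite -val_enum_ord filter_map hk.
rewrite (filter_iota_ltn 0 (ltnW hs1n)).
have := congr1 (take (size s1)) hval.
by rewrite take_size_cat ?size_map // take_iota (minn_idPl (ltnW hs1n)).
Qed.

Section Group.
Variables (G : Type) (mul : G -> G -> G) (inv : G -> G) (e : G).
Hypothesis hG : is_group mul inv e.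

Declare Scope group_law_scope.
Local Notation "a * b" := (mul a b) : group_law_scope.
Local Notation "a ^-1" := (inv a) : group_law_scope.
Local Open Scope group_law_scope.
Local Notation zpow := (zpow mul inv e).
Local Notation gprod := (gprod mul e).
Local Notation C := (in_comm_subgroup mul inv e).

Lemma mulgA a b c : a * (b * c) = a * b * c. Proof. by case: hG. Qed.
Lemma mul1g a : e * a = a. Proof. by case: hG. Qed.
Lemma mulg1 a : a * e = a. Proof. by case: hG. Qed.
Lemma mulVg a : a^-1 * a = e. Proof. by case: hG. Qed.
Lemma mulgV a : a * a^-1 = e. Proof. by case: hG. Qed.

Lemma mulKg a b : a^-1 * (a * b) = b. Proof. by rewrite mulgA mulVg mul1g. Qed.
Lemma mulKVg a b : a * (a^-1 * b) = b. Proof. by rewrite mulgA mulgV mul1g. Qed.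
Lemma mulgK a b : b * a * a^-1 = b. Proof. by rewrite -mulgA mulgV mulg1. Qed.
Lemma mulgKV a b : b * a^-1 * a = b. Proof. by rewrite -mulgA mulVg mulg1. Qed.

Lemma invMg a b : (a * b)^-1 = b^-1 * a^-1.
Proof.
have hab : a * b * (b^-1 * a^-1) = e by rewrite -mulgA mulKVg mulgV.
by rewrite -[RHS](mulKg (a * b)) hab mulg1.
Qed.

Lemma comm_eq1 a b : comm mul inv a b = e -> a * b = b * a.
Proof.
move=> hab; have hba : b^-1 * (a * b) = a by rewrite -[RHS]mulg1 -hab mulKVg.
by rewrite -[a * b](mulKVg b) hba.
Qed.

Lemma commuteV a p : a * p = p * a -> a^-1 * p = p * a^-1.
Proof. by move=> hap; rewrite -[LHS](mulgK a) -(mulgA _ p a) -hap mulKg. Qed.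

Lemma commute_iter a p : a * p = p * a ->
  forall k, iter k (mul a) e * p = p * iter k (mul a) e.
Proof.
move=> hap; elim=> [|k IHk] /=; first by rewrite mul1g mulg1.
by rewrite -mulgA IHk mulgA hap -mulgA.
Qed.

Lemma zpow_commute g p z : g * p = p * g -> zpow g z * p = p * zpow g z.
Proof.
move=> hgp; case: z => k; first exact: commute_iter.
exact: (commute_iter (commuteV hgp)).
Qed.

Lemma zpow_addr1 g z : zpow g (z + 1) = zpow g z * g.
Proof.
case: z => [k|[|k]]; first by rewrite -PoszD addn1 /= (commute_iter (erefl (g * g)) k).
  by rewrite /= mulg1 mulVg.
have -> : Negz k.+1 + 1 = Negz k by rewrite !NegzE -[k.+2]addn1 PoszD opprD addrNK.
by rewrite /= -[in RHS](commute_iter (erefl (g^-1 * g^-1)) k) mulgA mulgKV.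
Qed.

Lemma zpow_subr1 g z : zpow g (z - 1) = zpow g z * g^-1.
Proof. by rewrite -[in RHS](subrK 1 z) zpow_addr1 mulgK. Qed.

Lemma zpowD g a b : zpow g (a + b) = zpow g a * zpow g b.
Proof.
case: b => k; elim: k => [|k IHk].
- by rewrite addr0 /= mulg1.
- by rewrite -addn1 PoszD addrA !zpow_addr1 IHk mulgA.
- by rewrite (_ : Negz 0 = -1) // zpow_subr1 /= mulg1.
- have -> : Negz k.+1 = Negz k - 1 by rewrite !NegzE -addn1 PoszD opprD.
  by rewrite addrA !zpow_subr1 IHk mulgA.
Qed.

Lemma gprod_rcons s a : gprod (rcons s a) = gprod s * a.
Proof. by elim: s => [|b s IHs] /=; rewrite ?mul1g ?mulg1 // IHs mulgA. Qed.

Lemma gprod_map_mul (I : Type) (a b : I -> G) (s : seq I) :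
  (forall s1 i s2, s = s1 ++ i :: s2 ->
     gprod (map b s1) * a i = a i * gprod (map b s1)) ->
  gprod [seq a i * b i | i <- s] = gprod (map a s) * gprod (map b s).
Proof.
elim/last_ind: s => [|s i IHs] hab /=; first by rewrite mulg1.
have hai : gprod (map b s) * a i = a i * gprod (map b s).
  by apply: (hab s i [::]); rewrite cats1.
rewrite !map_rcons !gprod_rcons IHs => [|s1 j s2 hs]; last first.
  by apply: (hab s1 j (rcons s2 i)); rewrite hs rcons_cat.
by rewrite -!mulgA [gprod (map b s) * _]mulgA hai -mulgA.
Qed.

Definition eq_modC a b := C (a^-1 * b).

Lemma eq_modC_refl a : eq_modC a a.
Proof. by rewrite /eq_modC mulVg; apply: gen_e. Qed.

Lemma eq_modC_trans b a c : eq_modC a b -> eq_modC b c -> eq_modC a c.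
Proof. by rewrite /eq_modC -[c in _ -> C (_ * c)](mulKVg b) mulgA; apply: gen_mul. Qed.

Lemma eq_modC_commute a b : eq_modC (a * b) (b * a).
Proof. by rewrite /eq_modC invMg -mulgA; apply: gen_in; exists b, a. Qed.

Lemma comm_subgroupJ c b : C c -> C (b^-1 * (c * b)).
Proof.
by move=> hc; rewrite -[_ * _](mulKVg c); apply: gen_mul => //; apply: gen_in; exists c, b.
Qed.

Lemma eq_modCM a a' b b' :
  eq_modC a a' -> eq_modC b b' -> eq_modC (a * b) (a' * b').
Proof.
rewrite /eq_modC => haa' hbb'.
have -> : (a * b)^-1 * (a' * b') = b^-1 * (a^-1 * a' * b) * (b^-1 * b').
  by rewrite invMg -!mulgA mulKVg.
by apply: gen_mul => //; apply: comm_subgroupJ.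
Qed.

Lemma gprod_map_mul_modC (I : Type) (a b : I -> G) (s : seq I) :
  eq_modC (gprod [seq a i * b i | i <- s]) (gprod (map a s) * gprod (map b s)).
Proof.
elim: s => [|i s IHs] /=; first by rewrite mulg1; apply: eq_modC_refl.
apply: (eq_modC_trans (eq_modCM (eq_modC_refl (a i * b i)) IHs)).
rewrite -!mulgA; apply: eq_modCM; first exact: eq_modC_refl.
by rewrite !mulgA; apply: eq_modCM (eq_modC_refl _); apply: eq_modC_commute.
Qed.

Variables (n : nat) (x : 'I_n -> G).
Local Notation g_vec := (g_vec mul inv e x).
Local Notation g_prefix := (g_prefix mul inv e x).

Lemma eq_g_vec r s : r =1 s -> g_vec r = g_vec s.
Proof.
by move=> hrs; rewrite /Defs.g_vec; congr Defs.gprod; apply: eq_map => i; rewrite hrs.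
Qed.

Lemma g_vec_mul_map r s :
  g_vec (fun i => r i + s i) =
  gprod [seq zpow (x i) (r i) * zpow (x i) (s i) | i <- enum 'I_n].
Proof. by rewrite /Defs.g_vec; congr Defs.gprod; apply: eq_map => i; rewrite zpowD. Qed.

Lemma g_vecD_modC r s : eq_modC (g_vec (fun i => r i + s i)) (g_vec r * g_vec s).
Proof. by rewrite g_vec_mul_map; apply: gprod_map_mul_modC. Qed.

Lemma g_vecD_X m r : (forall k, comm mul inv (g_prefix m k) (x k) = e) ->
  g_vec (fun i => r i + m i) = g_vec r * g_vec m.
Proof.
move=> hX; rewrite g_vec_mul_map; apply: gprod_map_mul => s1 k s2 hs.
by rewrite (enum_ord_prefix hs); symmetry; apply/zpow_commute/esym/comm_eq1/hX.
Qed.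

Hypothesis hfree : forall r, C (g_vec r) -> forall i, r i = 0.

Lemma eq_modC_g_vec_inj r s : eq_modC (g_vec r) (g_vec s) -> r =1 s.
Proof.
move=> hrs i; pose d j := s j - r j.
have hd : eq_modC (g_vec r) (g_vec r * g_vec d).
  apply: (eq_modC_trans hrs); rewrite (@eq_g_vec s (fun j => r j + d j)).
    exact: g_vecD_modC.
  by move=> j; rewrite /d addrC subrK.
rewrite /eq_modC mulKg in hd.
exact/esym/subr0_eq/(hfree hd i).
Qed.

End Group.

Theorem corollary6p2 (G : Type) (mul : G -> G -> G) (inv : G -> G) (e : G)
  (n : nat) (x : 'I_n -> G) :
  is_group mul inv e ->
  (* G is generated by x_1, ..., x_n *)
  (forall g : G, gen_by mul inv e (fun y => exists i, y = x i) g) ->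
  (* the commutator subgroup C is finite *)
  finite_pred (in_comm_subgroup mul inv e) ->
  (* G/C is free abelian with basis the images of the x_i:
     (generation is given above) the images are Z-linearly independent *)
  (forall r : 'I_n -> int,
      in_comm_subgroup mul inv e (g_vec mul inv e x r) -> forall i, r i = 0) ->
  forall q : G, in_Q mul inv e x q ->
  forall rq : 'I_n -> int, decomp mul inv e x q rq ->
  forall r : 'I_n -> int, link mul inv e x r rq q = e.
Proof.
move=> hG _ _ hfree q [[[m [-> hX]] _] hcen] rq [c [hc hq]] r.
have hrq : rq =1 m.
  apply: (eq_modC_g_vec_inj hG hfree).
  by rewrite /eq_modC hq (mulKg hG).
rewrite /link (eq_g_vec _ _ _ _ (s := fun i => r i + m i)) => [|i]; last by rewrite hrq.
by rewrite (g_vecD_X hG r hX) hcen (mulVg hG).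
Qed.
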